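(* Let $n\ge 1$, $\ell=2n^2-1$, and let $S_1,\dots,S_\ell$ be pairwise disjoint finite sets with $|S_i|\le n^2$ for every $i$. Then there is an injective map $\phi$ from $S_1\cup\dots\cup S_\ell$ to the set of $2$-element subsets of $\{1,\dots,2n^2\}$ such that for every $i$ and all distinct $s,s'\in S_i$, the sets $\phi(s)$ and $\phi(s')$ are disjoint. *)

From mathcomp Require Import all_boot.
Set Implicit Arguments. Unset Strict Implicit. Unset Printing Implicit Defensive.

From mathcomp Require Import all_boot zify.
Set Implicit Arguments. Unset Strict Implicit.

(* The complete graph on 2m vertices splits into 2m - 1 perfect matchings of m
   edges each (the round-robin schedule): on the vertices Z_(2m-1) + {oo}, the
   i-th matching is {i, oo} together with the pairs {i + k, i - k}, 0 < k < m.
   Sending the k-th element of S_i to the k-th edge of the i-th matching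
   (m = n^2) gives the required map. *)

Lemma card_ord_pair N a b : a < N -> b < N -> a != b ->
  #|[set y : 'I_N | (val y == a) || (val y == b)]| = 2.
Proof.
move=> ltaN ltbN neqab.
have -> : [set y : 'I_N | (val y == a) || (val y == b)]
    = [set Ordinal ltaN; Ordinal ltbN].
  by apply/setP => y; rewrite !inE -!val_eqE.
by rewrite cards2 -val_eqE /= neqab.
Qed.

Section Labelling.

Variables (I V T : finType) (m : nat) (edge : I -> nat -> {set V}).
Hypothesis edge_inj : forall i j k l, k < m -> l < m ->
  edge i k = edge j l -> i = j /\ k = l.
Hypothesis edge_disjoint : forall i k l, k < m -> l < m -> k != l ->
  [disjoint edge i k & edge i l].

Variable S : I -> {set T}.
Hypothesis S_disjoint : forall i j, i != j -> [disjoint S i & S j].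
Hypothesis card_S : forall i, #|S i| <= m.

Definition label (s : T) : {set V} :=
  if [pick i | s \in S i] is Some i then edge i (index s (enum (S i)))
  else set0.

Lemma labelE i s : s \in S i -> label s = edge i (index s (enum (S i))).
Proof.
move=> Sis; rewrite /label; case: pickP => [j Sjs | noS]; last first.
  by have := noS i; rewrite Sis.
have [-> // | neqji] := eqVneq j i.
by have := disjointFr (S_disjoint neqji) Sjs; rewrite Sis.
Qed.

Lemma index_S_lt i s : s \in S i -> index s (enum (S i)) < m.
Proof.
by move=> Sis; rewrite (leq_trans _ (card_S i)) // cardE index_mem mem_enum.
Qed.

Lemma index_S_inj i s s' : s \in S i -> s' \in S i ->
  index s (enum (S i)) = index s' (enum (S i)) -> s = s'.
Proof. by move=> Sis Sis'; apply: (index_inj s); rewrite mem_enum. Qed.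

Lemma label_inj : {in \bigcup_i S i &, injective label}.
Proof.
move=> s s' /bigcupP[i _ Sis] /bigcupP[j _ Sjs'].
rewrite (labelE Sis) (labelE Sjs') => eq_edge.
have [eqij eq_index] := edge_inj (index_S_lt Sis) (index_S_lt Sjs') eq_edge.
by move: Sjs' eq_index; rewrite -eqij; apply: index_S_inj.
Qed.

Lemma label_is_edge s : s \in \bigcup_i S i ->
  exists i k, k < m /\ label s = edge i k.
Proof.
case/bigcupP=> i _ Sis; exists i, (index s (enum (S i))).
by rewrite (labelE Sis) index_S_lt.
Qed.

Lemma label_disjoint i s s' : s \in S i -> s' \in S i -> s != s' ->
  [disjoint label s & label s'].
Proof.
move=> Sis Sis' neqss'; rewrite (labelE Sis) (labelE Sis').
apply: edge_disjoint (index_S_lt Sis) (index_S_lt Sis') _.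
by apply: contra neqss' => /eqP/(index_S_inj Sis Sis')/eqP.
Qed.

End Labelling.

Section RoundRobin.

Variable m : nat.

(* Vertex [2 * m - 1] plays the role of oo; the tail of the 0-th edge is oo. *)
Definition rr_head (i k : nat) : nat :=
  if i + k < 2 * m - 1 then i + k else i + k - (2 * m - 1).

Definition rr_tail (i k : nat) : nat :=
  if k == 0 then 2 * m - 1
  else if k <= i then i - k else i + (2 * m - 1) - k.

Definition round_robin (i k : nat) : {set 'I_(2 * m)} :=
  [set v | (val v == rr_head i k) || (val v == rr_tail i k)].

Lemma rr_ends_proper i k : i < 2 * m - 1 -> k < m ->
  [/\ rr_head i k != rr_tail i k, rr_head i k < 2 * m & rr_tail i k < 2 * m].
Proof. by move=> *; rewrite /rr_head /rr_tail; split; repeat case: ifP; lia. Qed.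

Lemma rr_ends_distinct i k l : i < 2 * m - 1 -> k < m -> l < m -> k != l ->
  [&& rr_head i k != rr_head i l, rr_head i k != rr_tail i l,
      rr_tail i k != rr_head i l & rr_tail i k != rr_tail i l].
Proof. by move=> *; rewrite /rr_head /rr_tail; repeat case: ifP; lia. Qed.

(* An edge {i + k, i - k} determines i as the midpoint of its ends, as 2m - 1 is odd. *)
Lemma rr_ends_inj i j k l : i < 2 * m - 1 -> j < 2 * m - 1 -> k < m -> l < m ->
  (rr_head i k == rr_head j l) || (rr_head i k == rr_tail j l) ->
  (rr_tail i k == rr_head j l) || (rr_tail i k == rr_tail j l) ->
  (i == j) && (k == l).
Proof. by move=> ? ? ? ?; rewrite /rr_head /rr_tail; repeat case: ifP; lia. Qed.

Lemma card_round_robin i k : i < 2 * m - 1 -> k < m -> #|round_robin i k| = 2.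
Proof. by move=> lti ltk; case: (rr_ends_proper lti ltk) => *; apply: card_ord_pair. Qed.

Lemma round_robin_disjoint i k l : i < 2 * m - 1 -> k < m -> l < m -> k != l ->
  [disjoint round_robin i k & round_robin i l].
Proof.
move=> lti ltk ltl neqkl; have := rr_ends_distinct lti ltk ltl neqkl.
by rewrite disjoint_subset => ends_neq; apply/subsetP => v; rewrite !inE; lia.
Qed.

Lemma round_robin_inj i j k l : i < 2 * m - 1 -> j < 2 * m - 1 -> k < m -> l < m ->
  round_robin i k = round_robin j l -> i = j /\ k = l.
Proof.
move=> lti ltj ltk ltl eq_edge.
have [_ lt_head lt_tail] := rr_ends_proper lti ltk.
have head_in : Ordinal lt_head \in round_robin j l by rewrite -eq_edge inE eqxx.
have tail_in : Ordinal lt_tail \in round_robin j l by rewrite -eq_edge inE eqxx orbT.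
rewrite !inE /= in head_in tail_in.
by have /andP[/eqP -> /eqP ->] := rr_ends_inj lti ltj ltk ltl head_in tail_in.
Qed.

End RoundRobin.

Theorem mainTheorem12 (n : nat) (hn : 1 <= n) (T : finType)
    (S : 'I_(2 * n ^ 2 - 1) -> {set T})
    (hdisj : forall i j, i != j -> [disjoint S i & S j])
    (hsize : forall i, #|S i| <= n ^ 2) :
  exists phi : T -> {set 'I_(2 * n ^ 2)},
    [/\ {in \bigcup_i S i &, injective phi},
        (forall s, s \in \bigcup_i S i -> #|phi s| = 2)
      & (forall i s s', s \in S i -> s' \in S i -> s != s' ->
           [disjoint phi s & phi s'])].
Proof.
pose edge (i : 'I_(2 * n ^ 2 - 1)) := round_robin (n ^ 2) i.
have edge_inj i j k l : k < n ^ 2 -> l < n ^ 2 -> edge i k = edge j l -> i = j /\ k = l.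
  by move=> ltk ltl /(round_robin_inj (ltn_ord i) (ltn_ord j) ltk ltl)[/val_inj].
have edge_disjoint i k l : k < n ^ 2 -> l < n ^ 2 -> k != l ->
    [disjoint edge i k & edge i l] by apply: round_robin_disjoint.
exists (label edge S); split.
- exact: (label_inj edge_inj hdisj hsize).
- move=> s /(label_is_edge edge hdisj hsize)[i [k [ltk ->]]].
  exact: card_round_robin.
- exact: (label_disjoint edge_disjoint hdisj hsize).
Qed.
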